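(* Let $\mathcal{C}$ be a category, let $\mathcal{D}$ be a full pro-reflective subcategory of $\mathcal{C}$, and let $J$ be a directed partially ordered set. Let $X,Y\in Ob\,\mathcal{C}$ and let $\boldsymbol{q}=(q_\mu):Y\to\boldsymbol{Y}=(Y_\mu,q_{\mu\mu'},M)$ be a $\mathcal{C}$-expansion of $Y$ with respect to $\mathcal{D}$. Suppose $(H_\mu)_{\mu\in M}$ is a family of $J$-shape morphisms $H_\mu:X\to Y_\mu$ in $Sh^J_{(\mathcal{C},\mathcal{D})}$ such that $S^J(q_{\mu\mu'})H_{\mu'}=H_\mu$ for all $\mu\le\mu'$ in $M$ (i.e. $\boldsymbol{H}=(H_\mu)$ is a morphism $\lfloor X\rfloor\to S^J(\boldsymbol{Y})$ of $pro$-$Sh^J_{(\mathcal{C},\mathcal{D})}$ from the rudimentary system $\lfloor X\rfloor$). Then there exists a unique $J$-shape morphism $F:X\to Y$ such that $S^J(q_\mu)F=H_\mu$ for every $\mu\in M$. Equivalently, $S^J(\boldsymbol{q}):Y\to S^J(\boldsymbol{Y})$ is an inverse limit of $S^J(\boldsymbol{Y})$ in $Sh^J_{(\mathcal{C},\mathcal{D})}$, and for each $X$ the assignment $F\mapsto (S^J(q_\mu)F)_\mu$ is a bijection $Sh^J_{(\mathcal{C},\mathcal{D})}(X,Y)\to pro\text{-}Sh^J_{(\mathcal{C},\mathcal{D})}(\lfloor X\rfloor,S^J(\boldsymbol{Y}))$.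
   Context: An inverse system $\boldsymbol{X}=(X_\lambda,p_{\lambda\lambda'},\Lambda)$ in a category $\mathcal{C}$: $\Lambda$ a directed preordered set, objects $X_\lambda$, morphisms $p_{\lambda\lambda'}:X_{\lambda'}\to X_\lambda$ ($\lambda\le\lambda'$) with $p_{\lambda\lambda}=1$, $p_{\lambda\lambda'}p_{\lambda'\lambda''}=p_{\lambda\lambda''}$. For a directed partially ordered set $J$ and inverse systems $\boldsymbol{X}$, $\boldsymbol{Y}=(Y_\mu,q_{\mu\mu'},M)$, a $J$-morphism $(f,f^j_\mu):\boldsymbol{X}\to\boldsymbol{Y}$ consists of a function $f:M\to\Lambda$ and $\mathcal{C}$-morphisms $f^j_\mu:X_{f(\mu)}\to Y_\mu$ ($\mu\in M$, $j\in J$) such that for all $\mu\le\mu'$ there exist $\lambda\ge f(\mu),f(\mu')$ and $j_0\in J$ with $f^{j'}_\mu p_{f(\mu)\lambda}=q_{\mu\mu'}f^{j'}_{\mu'}p_{f(\mu')\lambda}$ for all $j'\ge j_0$. Composition: $(g,g^j_\nu)(f,f^j_\mu)=(fg,g^j_\nu f^j_{g(\nu)})$; identity $(1_\Lambda,1_{X_\lambda})$. Two $J$-morphisms $(f,f^j_\mu),(f',f'^j_\mu):\boldsymbol{X}\to\boldsymbol{Y}$ are equivalent if for every $\mu$ there exist $\lambda\ge f(\mu),f'(\mu)$ and $j_0$ with $f^{j'}_\mu p_{f(\mu)\lambda}=f'^{j'}_\mu p_{f'(\mu)\lambda}$ for all $j'\ge j_0$; $pro^J$-$\mathcal{C}$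 is the resulting quotient category (objects: inverse systems in $\mathcal{C}$). For $J=\{1\}$ this is the usual $pro$-$\mathcal{C}$; the functor $\underline{I}:pro$-$\mathcal{C}\to pro^J$-$\mathcal{C}$ is the identity on objects and sends $[(f,f_\mu)]$ to $[(f,f^j_\mu=f_\mu)]$. Let $\mathcal{D}\subseteq\mathcal{C}$ be a full subcategory. For an inverse system $\boldsymbol{X}$ in $\mathcal{C}$ and $X\in Ob\,\mathcal{C}$, a family $\boldsymbol{p}=(p_\lambda:X\to X_\lambda)$ with $p_{\lambda\lambda'}p_{\lambda'}=p_\lambda$ is a $\mathcal{C}$-expansion of $X$ with respect to $\mathcal{D}$ if (E1) every $\mathcal{C}$-morphism $h:X\to P$ with $P\in Ob\,\mathcal{D}$ factors as $h=gp_\lambda$ for some $\lambda$ and $g:X_\lambda\to P$, and (E2) if $gp_\lambda=g'p_\lambda$ for $g,g':X_\lambda\to P$, $P\in Ob\,\mathcal{D}$, then $gp_{\lambda\lambda'}=g'p_{\lambda\lambda'}$ for some $\lambda'\ge\lambda$; it is a $\mathcal{D}$-expansion if moreover $\boldsymbol{X}$ is an inverse system in $\mathcal{D}$. $\mathcal{D}$ is pro-reflective if every object of $\mathcal{C}$ has a $\mathcal{D}$-expansion. The $J$-shape category $Sh^J_{(\mathcal{C},\mathcal{D})}$ has the objects of $\mathcal{C}$; choosing $\mathcal{D}$-expansions $\boldsymbol{p}:X\to\boldsymbol{X}$, $\boldsymbol{q}:Y\to\boldsymbol{Y}$, its morphisms $X\to Y$ are the morphisms $\boldsymbol{X}\to\boldsymbol{Y}$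 of $pro^J$-$\mathcal{D}$, where $\boldsymbol{f}$ (w.r.t. $\boldsymbol{p},\boldsymbol{q}$) and $\boldsymbol{f}'$ (w.r.t. other $\mathcal{D}$-expansions $\boldsymbol{p}',\boldsymbol{q}'$) are identified iff $\underline{I}(\boldsymbol{j})\boldsymbol{f}=\boldsymbol{f}'\underline{I}(\boldsymbol{i})$, with $\boldsymbol{i},\boldsymbol{j}$ the unique isomorphisms of $pro$-$\mathcal{D}$ satisfying $\boldsymbol{ip}=\boldsymbol{p}'$, $\boldsymbol{jq}=\boldsymbol{q}'$; composition is composition of representatives. The $J$-shape functor $S^J:\mathcal{C}\to Sh^J_{(\mathcal{C},\mathcal{D})}$ is the identity on objects and sends $g:X\to Y$ to the class of $\underline{I}(\boldsymbol{g})$, where $\boldsymbol{g}:\boldsymbol{X}\to\boldsymbol{Y}$ is the unique $pro$-$\mathcal{D}$ morphism with $\boldsymbol{gp}=\boldsymbol{q}g$. For an inverse system $\boldsymbol{Y}$ in $\mathcal{C}$, $S^J(\boldsymbol{Y})=(Y_\mu,S^J(q_{\mu\mu'}),M)$. *)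

Set Implicit Arguments.
Unset Strict Implicit.

Record Category := {
  Ob : Type;
  Hom : Ob -> Ob -> Type;
  comp : forall x y z : Ob, Hom y z -> Hom x y -> Hom x z;
  idm : forall x : Ob, Hom x x;
  comp_assoc : forall (x y z w : Ob) (h : Hom z w) (g : Hom y z) (f : Hom x y),
      comp h (comp g f) = comp (comp h g) f;
  comp_id_l : forall (x y : Ob) (f : Hom x y), comp (idm y) f = f;
  comp_id_r : forall (x y : Ob) (f : Hom x y), comp f (idm x) = f
}.
Arguments Ob : clear implicits.
Arguments Hom : clear implicits.
Arguments comp {_ x y z} _ _.
Arguments idm {_} x.

(** A full subcategory D of C is given by the predicate on objects [inD]. *)

Record DirPreorder := {
  idx : Type;
  le : idx -> idx -> Prop;
  le_refl : forall a, le a a;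
  le_trans : forall a b c, le a b -> le b c -> le a c;
  le_dir : forall a b, exists c, le a c /\ le b c
}.
Arguments le {d} _ _.

Record DirPoset := {
  jset :> DirPreorder;
  jantisym : forall a b : idx jset, le a b -> le b a -> a = b;
  jinhab : inhabited (idx jset)
}.

(** * Inverse systems in C.
    [bond l l'] is p_{l l'} : X_{l'} -> X_l; its axioms are only imposed for l <= l'. *)
Record InvSys (C : Category) := {
  ind : DirPreorder;
  obj : idx ind -> Ob C;
  bond : forall l l' : idx ind, Hom C (obj l') (obj l);
  bond_id : forall l, bond l l = idm (obj l);
  bond_comp : forall l l' l'', le l l' -> le l' l'' ->
      comp (bond l l') (bond l' l'') = bond l l''
}.
Arguments ind {C} _.
Arguments obj {C} _ _.
Arguments bond {C} _ _ _.

Section Mor.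
Variable C : Category.

Record JMorData (J : DirPoset) (X Y : InvSys C) := {
  jf : idx (ind Y) -> idx (ind X);
  jcomp : idx J -> forall mu : idx (ind Y), Hom C (obj X (jf mu)) (obj Y mu)
}.

Definition isJMor (J : DirPoset) (X Y : InvSys C) (f : JMorData J X Y) : Prop :=
  forall mu mu' : idx (ind Y), le mu mu' ->
    exists lam : idx (ind X), le (jf f mu) lam /\ le (jf f mu') lam /\
      exists j0 : idx J, forall j' : idx J, le j0 j' ->
        comp (jcomp f j' mu) (bond X (jf f mu) lam)
        = comp (bond Y mu mu') (comp (jcomp f j' mu') (bond X (jf f mu') lam)).

Definition JEquiv (J : DirPoset) (X Y : InvSys C) (f f' : JMorData J X Y) : Prop :=
  forall mu : idx (ind Y),
    exists lam : idx (ind X), le (jf f mu) lam /\ le (jf f' mu) lam /\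
      exists j0 : idx J, forall j' : idx J, le j0 j' ->
        comp (jcomp f j' mu) (bond X (jf f mu) lam)
        = comp (jcomp f' j' mu) (bond X (jf f' mu) lam).

Definition JComp (J : DirPoset) (X Y Z : InvSys C)
  (g : JMorData J Y Z) (f : JMorData J X Y) : JMorData J X Z :=
  {| jf := fun nu => jf f (jf g nu);
     jcomp := fun j nu => comp (jcomp g j nu) (jcomp f j (jf g nu)) |}.

(** * Morphisms of pro-C (the case J = {1}) *)
Record ProMorData (X Y : InvSys C) := {
  pf : idx (ind Y) -> idx (ind X);
  pcomp : forall mu : idx (ind Y), Hom C (obj X (pf mu)) (obj Y mu)
}.

Definition isProMor (X Y : InvSys C) (f : ProMorData X Y) : Prop :=
  forall mu mu' : idx (ind Y), le mu mu' ->
    exists lam : idx (ind X), le (pf f mu) lam /\ le (pf f mu') lam /\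
        comp (pcomp f mu) (bond X (pf f mu) lam)
        = comp (bond Y mu mu') (comp (pcomp f mu') (bond X (pf f mu') lam)).

Definition Ifun (J : DirPoset) (X Y : InvSys C) (f : ProMorData X Y) : JMorData J X Y :=
  {| jf := pf f; jcomp := fun _ mu => pcomp f mu |}.

Record Expansion (X : Ob C) := {
  esys : InvSys C;
  eproj : forall l : idx (ind esys), Hom C X (obj esys l);
  ecompat : forall l l', le l l' -> comp (bond esys l l') (eproj l') = eproj l
}.

Arguments esys {X} _.
Arguments eproj {X} _ _.

Definition isExpansion (inD : Ob C -> Prop) (X : Ob C) (e : Expansion X) : Prop :=
  (forall (P : Ob C), inD P -> forall h : Hom C X P,
      exists (l : idx (ind (esys e))) (g : Hom C (obj (esys e) l) P),
        h = comp g (eproj e l)) /\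
  (forall (P : Ob C), inD P -> forall (l : idx (ind (esys e)))
      (g g' : Hom C (obj (esys e) l) P),
      comp g (eproj e l) = comp g' (eproj e l) ->
      exists l', le l l' /\ comp g (bond (esys e) l l') = comp g' (bond (esys e) l l')).

Definition isDExpansion (inD : Ob C -> Prop) (X : Ob C) (e : Expansion X) : Prop :=
  isExpansion inD e /\ forall l, inD (obj (esys e) l).

(** * The J-shape category, relative to a choice E of D-expansions of all objects
    (such a choice exists exactly because D is pro-reflective).
    A J-shape morphism X -> Y is a J-morphism [F : JMorData J (esys (E X)) (esys (E Y))]
    with [isJMor F]; two are equal in Sh^J iff they are [JEquiv]; composition is
    [JComp]. *)

(** [IsShapeOf E g F]: F represents S^J(g), i.e. F is equivalent to I(g') where g' is
    a pro-D morphism with g' p = q g. *)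
Definition IsShapeOf (J : DirPoset) (E : forall X : Ob C, Expansion X)
  (X Y : Ob C) (g : Hom C X Y) (F : JMorData J (esys (E X)) (esys (E Y))) : Prop :=
  isJMor F /\
  exists g' : ProMorData (esys (E X)) (esys (E Y)),
    isProMor g' /\
    (forall mu, comp (pcomp g' mu) (eproj (E X) (pf g' mu)) = comp (eproj (E Y) mu) g) /\
    JEquiv F (Ifun J g').

End Mor.
Arguments IsShapeOf {C J} E {X Y} g F.
Arguments esys {C X} _.
Arguments eproj {C X} _ _.

(* At a coordinate P of D, a J-morphism into an expansion is determined by a germ: a
   J-indexed family of maps X_l -> P, taken up to bonding in X and eventual equality in J.
   The key fact is that for u : (Y_mu)_k -> P with P in D, the germ of u H_mu depends only
   on the composite u p_k q_mu : Y -> P: two such composites are equalised in some Y_mu''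
   because q is an expansion, and the hypothesis S^J(q_mu mu'') H_mu'' = H_mu transports
   germs along mu <= mu''.  Factoring each projection p_nu of the chosen D-expansion of Y
   as h p_k q_mu and putting F_nu = h H_mu gives a J-morphism; S^J(q_mu) F = H_mu and the
   uniqueness of F are two more instances of the same invariance. *)

From Stdlib Require Import Morphisms IndefiniteDescription.
Set Implicit Arguments.
Unset Strict Implicit.

Section JShapeLimit.
Variable C : Category.
Variable J : DirPoset.

Record germ (A : InvSys C) (P : Ob C) := Germ {
  gidx : idx (ind A);
  gmap : idx J -> Hom C (obj A gidx) P
}.

Definition germ_equiv A P (g1 g2 : germ A P) : Prop :=
  exists l, le (gidx g1) l /\ le (gidx g2) l /\
    exists j0 : idx J, forall j, le j0 j ->
      comp (gmap g1 j) (bond A (gidx g1) l) = comp (gmap g2 j) (bond A (gidx g2) l).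

Definition germ_postcomp A P Q (v : Hom C P Q) (g : germ A P) : germ A Q :=
  Germ (fun j => comp v (gmap g j)).

Definition JMor_germ A B (F : JMorData J A B) (mu : idx (ind B)) : germ A (obj B mu) :=
  Germ (fun j => jcomp F j mu).

Lemma comp_bond_split (A : InvSys C) P a b c (f : Hom C (obj A a) P) :
  le a b -> le b c -> comp f (bond A a c) = comp (comp f (bond A a b)) (bond A b c).
Proof. intros hab hbc. rewrite <- comp_assoc, bond_comp; auto. Qed.

Lemma germ_equiv_pointwise A P l (f1 f2 : idx J -> Hom C (obj A l) P) :
  (forall j, f1 j = f2 j) -> germ_equiv (Germ f1) (Germ f2).
Proof.
  intros e. destruct (jinhab J) as [j0].
  exists l; simpl; split; [apply le_refl | split; [apply le_refl |]].
  exists j0; intros j _; rewrite e; reflexivity.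
Qed.

#[local] Instance germ_equiv_Equivalence A P : Equivalence (@germ_equiv A P).
Proof.
  split.
  - intros [l f]; now apply germ_equiv_pointwise.
  - intros g1 g2 [l [h1 [h2 [j0 e]]]].
    exists l; split; [| split]; auto; exists j0; intros; symmetry; auto.
  - intros g1 g2 g3 [l [h1 [h2 [j0 e]]]] [l' [h2' [h3 [j0' e']]]].
    destruct (le_dir l l') as [m [hl hl']], (le_dir j0 j0') as [j1 [hj hj']].
    exists m; split; [| split]; try (eapply le_trans; eauto).
    exists j1; intros j hj1.
    rewrite (comp_bond_split _ h1 hl), e, <- comp_bond_split by eauto using le_trans.
    rewrite (comp_bond_split _ h2' hl'), e', <- comp_bond_split by eauto using le_trans.
    reflexivity.
Qed.

#[local] Instance germ_postcomp_Proper A P Q (v : Hom C P Q) :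
  Proper (@germ_equiv A P ==> @germ_equiv A Q) (germ_postcomp v).
Proof.
  intros g1 g2 [l [h1 [h2 [j0 e]]]]; exists l; split; [| split]; auto.
  exists j0; intros; simpl; rewrite <- !comp_assoc, e; auto.
Qed.

Lemma germ_postcomp_comp A P Q R (v : Hom C Q R) (u : Hom C P Q) (g : germ A P) :
  germ_equiv (germ_postcomp v (germ_postcomp u g)) (germ_postcomp (comp v u) g).
Proof. destruct g; apply germ_equiv_pointwise; intro; apply comp_assoc. Qed.

Lemma germ_postcomp_id A P (g : germ A P) : germ_equiv (germ_postcomp (idm P) g) g.
Proof. destruct g; apply germ_equiv_pointwise; intro; apply comp_id_l. Qed.

Lemma JEquiv_germ A B (F F' : JMorData J A B) :
  JEquiv F F' <-> forall mu, germ_equiv (JMor_germ F mu) (JMor_germ F' mu).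
Proof. reflexivity. Qed.

Lemma JMor_germ_JComp_Ifun A B Z (g : ProMorData B Z) (F : JMorData J A B) mu :
  JMor_germ (JComp (Ifun J g) F) mu = germ_postcomp (pcomp g mu) (JMor_germ F (pf g mu)).
Proof. reflexivity. Qed.

Lemma isJMor_germ A B (F : JMorData J A B) :
  isJMor F <-> forall mu mu', le mu mu' ->
    germ_equiv (JMor_germ F mu) (germ_postcomp (bond B mu mu') (JMor_germ F mu')).
Proof.
  split; intros hF mu mu' hmu; destruct (hF mu mu' hmu) as [l [h1 [h2 [j0 e]]]];
    exists l; (split; [| split]); auto; exists j0; intros j hj; simpl in *;
    rewrite e by auto.
  - apply comp_assoc.
  - symmetry; apply comp_assoc.
Qed.

Lemma JMor_germ_bond A B (F : JMorData J A B) P mu k (u : Hom C (obj B mu) P) :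
  isJMor F -> le mu k ->
  germ_equiv (germ_postcomp u (JMor_germ F mu))
             (germ_postcomp (comp u (bond B mu k)) (JMor_germ F k)).
Proof.
  intros hF hmu. rewrite <- germ_postcomp_comp, <- (proj1 (isJMor_germ F) hF mu k hmu).
  reflexivity.
Qed.

Lemma isJMor_Ifun (A B : InvSys C) (g : ProMorData A B) : isProMor g -> isJMor (Ifun J g).
Proof.
  intros hg mu mu' hmu; destruct (hg mu mu' hmu) as [l [h1 [h2 e]]].
  destruct (jinhab J) as [j0].
  exists l; split; [| split]; auto; exists j0; auto.
Qed.

Variable inD : Ob C -> Prop.

Lemma expansion_coequalize X (e : Expansion X) P l1 l2
  (g1 : Hom C (obj (esys e) l1) P) (g2 : Hom C (obj (esys e) l2) P) :
  isExpansion inD e -> inD P -> comp g1 (eproj e l1) = comp g2 (eproj e l2) ->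
  exists l, le l1 l /\ le l2 l /\ comp g1 (bond (esys e) l1 l) = comp g2 (bond (esys e) l2 l).
Proof.
  intros [_ he2] hP e12. destruct (le_dir l1 l2) as [l0 [h1 h2]].
  assert (e0 : comp (comp g1 (bond (esys e) l1 l0)) (eproj e l0)
             = comp (comp g2 (bond (esys e) l2 l0)) (eproj e l0)).
  { rewrite <- !comp_assoc, !ecompat; auto. }
  destruct (he2 P hP l0 _ _ e0) as [l [hl e']].
  exists l; split; [| split]; try (eapply le_trans; eauto).
  rewrite (comp_bond_split _ h1 hl), (comp_bond_split _ h2 hl); exact e'.
Qed.

Lemma JMor_germ_factor A Z (e : Expansion Z) (F : JMorData J A (esys e)) P k1 k2
  (u1 : Hom C (obj (esys e) k1) P) (u2 : Hom C (obj (esys e) k2) P) :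
  isExpansion inD e -> isJMor F -> inD P -> comp u1 (eproj e k1) = comp u2 (eproj e k2) ->
  germ_equiv (germ_postcomp u1 (JMor_germ F k1)) (germ_postcomp u2 (JMor_germ F k2)).
Proof.
  intros he hF hP e12.
  destruct (expansion_coequalize he hP e12) as [k [h1 [h2 e']]].
  rewrite (JMor_germ_bond u1 hF h1), (JMor_germ_bond u2 hF h2), e'.
  reflexivity.
Qed.

Lemma pro_lift_exists (A B : Ob C) (eA : Expansion A) (eB : Expansion B) (g : Hom C A B) :
  isExpansion inD eA -> (forall mu, inD (obj (esys eB) mu)) ->
  exists g' : ProMorData (esys eA) (esys eB), isProMor g' /\
    forall mu, comp (pcomp g' mu) (eproj eA (pf g' mu)) = comp (eproj eB mu) g.
Proof.
  intros hA hB.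
  assert (lift : forall mu, {s : {l & Hom C (obj (esys eA) l) (obj (esys eB) mu)} |
             comp (projT2 s) (eproj eA (projT1 s)) = comp (eproj eB mu) g}).
  { intro mu; apply constructive_indefinite_description.
    destruct (proj1 hA _ (hB mu) (comp (eproj eB mu) g)) as [l [h e]].
    exists (existT _ l h); symmetry; exact e. }
  pose proof (fun mu => proj2_sig (lift mu)) as hlift.
  exists {| pf := fun mu => projT1 (proj1_sig (lift mu));
            pcomp := fun mu => projT2 (proj1_sig (lift mu)) |}.
  split; [| exact hlift].
  intros mu mu' hmu; simpl.
  destruct (expansion_coequalize (g1 := projT2 (proj1_sig (lift mu)))
              (g2 := comp (bond _ mu mu') (projT2 (proj1_sig (lift mu')))) hA (hB mu))
    as [l [h1 [h2 e]]].
  - rewrite hlift, <- comp_assoc, hlift, comp_assoc, ecompat; auto.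
  - exists l; split; [| split]; auto. rewrite e; symmetry; apply comp_assoc.
Qed.

Variable E : forall X : Ob C, Expansion X.
Hypothesis hE : forall X : Ob C, isDExpansion inD (E X).

Lemma shape_representative_exists (A B : Ob C) (g : Hom C A B) :
  exists g' : ProMorData (esys (E A)) (esys (E B)), IsShapeOf E g (Ifun J g') /\
    forall mu, comp (pcomp g' mu) (eproj (E A) (pf g' mu)) = comp (eproj (E B) mu) g.
Proof.
  destruct (pro_lift_exists (eA := E A) (eB := E B) g (proj1 (hE A)) (proj2 (hE B)))
    as [g' [hg' eg']].
  exists g'; split; [| exact eg'].
  split; [apply isJMor_Ifun; exact hg' |].
  exists g'; split; [| split]; auto.
  apply JEquiv_germ; reflexivity.
Qed.

Variables X Y : Ob C.
Variable q : Expansion Y.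
Hypothesis hq : isExpansion inD q.
Variable H : forall mu : idx (ind (esys q)), JMorData J (esys (E X)) (esys (E (obj (esys q) mu))).
Hypothesis hH : forall mu, isJMor (H mu).
Hypothesis hcompat : forall mu mu' : idx (ind (esys q)), le mu mu' ->
  forall G, IsShapeOf E (bond (esys q) mu mu') G -> JEquiv (JComp G (H mu')) (H mu).

Lemma H_germ_bond mu mu' P k k'
  (u : Hom C (obj (esys (E (obj (esys q) mu))) k) P)
  (u' : Hom C (obj (esys (E (obj (esys q) mu'))) k') P) :
  le mu mu' -> inD P -> comp u (comp (eproj _ k) (bond (esys q) mu mu')) = comp u' (eproj _ k') ->
  germ_equiv (germ_postcomp u (JMor_germ (H mu) k)) (germ_postcomp u' (JMor_germ (H mu') k')).
Proof.
  intros hmu hP e.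
  destruct (shape_representative_exists (bond (esys q) mu mu')) as [g [hg eg]].
  pose proof (proj1 (JEquiv_germ _ _) (hcompat hmu hg) k) as hk.
  rewrite JMor_germ_JComp_Ifun in hk.
  rewrite <- hk, germ_postcomp_comp.
  apply (JMor_germ_factor (proj1 (hE _)) (@hH mu') hP).
  rewrite <- comp_assoc, eg; exact e.
Qed.

Lemma H_germ_factor mu1 mu2 P k1 k2
  (u1 : Hom C (obj (esys (E (obj (esys q) mu1))) k1) P)
  (u2 : Hom C (obj (esys (E (obj (esys q) mu2))) k2) P) :
  inD P -> comp u1 (comp (eproj _ k1) (eproj q mu1)) = comp u2 (comp (eproj _ k2) (eproj q mu2)) ->
  germ_equiv (germ_postcomp u1 (JMor_germ (H mu1) k1)) (germ_postcomp u2 (JMor_germ (H mu2) k2)).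
Proof.
  intros hP e. rewrite !comp_assoc in e.
  destruct (expansion_coequalize hq hP e) as [mu [h1 [h2 e']]].
  destruct (proj1 (proj1 (hE (obj (esys q) mu))) P hP
              (comp (comp u1 (eproj _ k1)) (bond (esys q) mu1 mu))) as [k [u eu]].
  transitivity (germ_postcomp u (JMor_germ (H mu) k)).
  - apply H_germ_bond; auto. rewrite comp_assoc; exact eu.
  - symmetry; apply H_germ_bond; auto. rewrite comp_assoc, <- e'; exact eu.
Qed.

Record q_factorization (nu : idx (ind (esys (E Y)))) := QFactorization {
  qf_idx : idx (ind (esys q));
  qf_exp_idx : idx (ind (esys (E (obj (esys q) qf_idx))));
  qf_map : Hom C (obj (esys (E (obj (esys q) qf_idx))) qf_exp_idx) (obj (esys (E Y)) nu)
}.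

Definition q_factors nu (s : q_factorization nu) : Prop :=
  eproj (E Y) nu = comp (qf_map s) (comp (eproj _ (qf_exp_idx s)) (eproj q (qf_idx s))).

Lemma q_factorization_exists nu : exists s : q_factorization nu, q_factors s.
Proof.
  destruct (proj1 hq _ (proj2 (hE Y) nu) (eproj (E Y) nu)) as [mu [g eg]].
  destruct (proj1 (proj1 (hE (obj (esys q) mu))) _ (proj2 (hE Y) nu) g) as [k [h eh]].
  exists (QFactorization h); unfold q_factors; simpl.
  rewrite eg, eh; symmetry; apply comp_assoc.
Qed.

Section Induced.
Variable fact : forall nu, q_factorization nu.
Hypothesis hfact : forall nu, q_factors (fact nu).

Definition induced_JMor : JMorData J (esys (E X)) (esys (E Y)) :=
  {| jf := fun nu => jf (H (qf_idx (fact nu))) (qf_exp_idx (fact nu));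
     jcomp := fun j nu =>
       comp (qf_map (fact nu)) (jcomp (H (qf_idx (fact nu))) j (qf_exp_idx (fact nu))) |}.

Lemma JMor_germ_induced nu :
  JMor_germ induced_JMor nu
  = germ_postcomp (qf_map (fact nu)) (JMor_germ (H (qf_idx (fact nu))) (qf_exp_idx (fact nu))).
Proof. reflexivity. Qed.

Lemma induced_JMor_isJMor : isJMor induced_JMor.
Proof.
  apply isJMor_germ; intros nu nu' hnu.
  rewrite !JMor_germ_induced, germ_postcomp_comp.
  apply H_germ_factor; [exact (proj2 (hE Y) nu) |].
  rewrite <- comp_assoc, <- !hfact, ecompat by exact hnu.
  reflexivity.
Qed.

Lemma induced_JMor_factors mu :
  exists G, IsShapeOf E (eproj q mu) G /\ JEquiv (JComp G induced_JMor) (H mu).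
Proof.
  destruct (shape_representative_exists (eproj q mu)) as [g [hg eg]].
  exists (Ifun J g); split; [exact hg |].
  apply JEquiv_germ; intro k.
  rewrite JMor_germ_JComp_Ifun, JMor_germ_induced, germ_postcomp_comp.
  etransitivity; [| apply germ_postcomp_id].
  apply H_germ_factor; [exact (proj2 (hE _) k) |].
  rewrite comp_id_l, <- comp_assoc, <- hfact.
  exact (eg k).
Qed.

Lemma induced_JMor_unique (F : JMorData J (esys (E X)) (esys (E Y))) :
  isJMor F -> (forall mu G, IsShapeOf E (eproj q mu) G -> JEquiv (JComp G F) (H mu)) ->
  JEquiv induced_JMor F.
Proof.
  intros hF hFH. apply JEquiv_germ; intro nu.
  destruct (shape_representative_exists (eproj q (qf_idx (fact nu)))) as [g [hg eg]].
  pose proof (proj1 (JEquiv_germ _ _) (hFH _ _ hg) (qf_exp_idx (fact nu))) as hk.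
  rewrite JMor_germ_JComp_Ifun in hk.
  rewrite JMor_germ_induced, <- hk, germ_postcomp_comp.
  etransitivity; [| apply germ_postcomp_id].
  apply (JMor_germ_factor (proj1 (hE Y)) hF (proj2 (hE Y) nu)).
  rewrite comp_id_l, <- comp_assoc, eg.
  symmetry; exact (hfact nu).
Qed.
End Induced.
End JShapeLimit.

Theorem theorem6 (C : Category) (inD : Ob C -> Prop) (J : DirPoset)
  (E : forall X : Ob C, Expansion X) (hE : forall X : Ob C, isDExpansion inD (E X))
  (X Y : Ob C) (q : Expansion Y) (hq : isExpansion inD q)
  (H : forall mu : idx (ind (esys q)),
         JMorData J (esys (E X)) (esys (E (obj (esys q) mu))))
  (hH : forall mu, isJMor (H mu))
  (hcompat : forall mu mu' : idx (ind (esys q)), le mu mu' ->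
      forall G, IsShapeOf E (bond (esys q) mu mu') G ->
        JEquiv (JComp G (H mu')) (H mu)) :
  exists F : JMorData J (esys (E X)) (esys (E Y)),
    isJMor F /\
    (forall mu, exists G, IsShapeOf E (eproj q mu) G /\ JEquiv (JComp G F) (H mu)) /\
    (forall F' : JMorData J (esys (E X)) (esys (E Y)), isJMor F' ->
       (forall mu G, IsShapeOf E (eproj q mu) G -> JEquiv (JComp G F') (H mu)) ->
       JEquiv F F').
Proof.
  pose (fact nu := proj1_sig (constructive_indefinite_description _
                     (q_factorization_exists hE hq nu))).
  assert (hfact : forall nu, q_factors (fact nu))
    by (intro nu; exact (proj2_sig (constructive_indefinite_description _ _))).
  exists (induced_JMor H fact); split; [| split].
  - exact (induced_JMor_isJMor hE hq hH hcompat hfact).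
  - exact (induced_JMor_factors hE hq hH hcompat hfact).
  - exact (induced_JMor_unique hE (H := H) hfact).
Qed.
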